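(* Let $R$ be a finite-dimensional $\mathbb{Q}$-algebra that is isomorphic to a finite product of number fields, let $\Gamma$ be a grid and let $(R,\Gamma,\{R_\gamma\}_{\gamma\in\Gamma})$ be a grid-grading of $R$. For $\gamma,\delta\in\Gamma$ we have $\langle x,y\rangle_R=0$ for all $x\in R_\gamma$, $y\in R_\delta$ if and only if $\gamma\neq\delta$ or $R_\gamma=0$.
   Context: For such $R$ and $x,y\in R$, $\langle x,y\rangle_R=\sum_{\sigma}\sigma(x)\overline{\sigma(y)}$, the sum over all ring homomorphisms $\sigma:R\to\mathbb{C}$. A grid is a quadruple $G=(S,1,D,* )$ with $1\in S$, $D\subseteq S^2$ containing $(1,s),(s,1)$ for all $s$, $*:D\to S$ with $s*1=1*s=s$, and $s*s=s$ only for $s=1$. A grid-grading of $R$ is $(R,G,\{R_g\}_{g\in G})$ with additive subgroups $R_g$ such that $\bigoplus_g R_g\to R$ is an isomorphism, $1\in R_1$, and whenever $R_gR_h\neq0$, $g*h$ is defined and $R_gR_h\subseteq R_{g*h}$. *)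

From Stdlib Require List.
From HB Require Import structures.
From mathcomp Require Import all_boot all_order all_algebra all_field.
Set Implicit Arguments. Unset Strict Implicit. Unset Printing Implicit Defensive.
Import Order.TTheory GRing.Theory Num.Theory.
Local Open Scope ring_scope.

(* Unital ring homomorphisms (no linearity required: ring homs between
   Q-algebras are automatically Q-linear). *)
Definition is_ringhom (A B : nzRingType) (f : A -> B) : Prop :=
  [/\ forall x y, f (x + y) = f x + f y,
      forall x y, f (x * y) = f x * f y &
      f 1 = 1].

(* R is isomorphic (as a ring) to a finite product K_0 x ... x K_(n-1) of number
   fields (finite extensions of Q): the map x |-> (phi_i x)_i is a bijective
   ring homomorphism R -> prod_i K_i. *)
Definition iso_prod_number_fields (R : falgType rat) : Prop :=
  exists (n : nat) (K : 'I_n -> fieldExtType rat) (phi : forall i, R -> K i),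
    [/\ forall i, is_ringhom (phi i),
        forall x y : R, (forall i, phi i x = phi i y) -> x = y &
        forall y : forall i, K i, exists x : R, forall i, phi i x = y i].

(* A grid (S, 1, D, * ) ; the partial operation * : D -> S is encoded as
   op : S -> S -> option S, with D = {(s,t) | op s t <> None}. *)
Record grid := Grid {
  gcarrier : Type;
  gone : gcarrier;
  gop : gcarrier -> gcarrier -> option gcarrier;
  gop1s : forall s, gop gone s = Some s;
  gops1 : forall s, gop s gone = Some s;
  gop_idem : forall s, gop s s = Some s -> s = gone
}.

Definition grid_grading (R : falgType rat) (G : grid) (Rg : gcarrier G -> R -> Prop)
  : Prop :=
  [/\
      forall g, Rg g 0 /\ (forall x y, Rg g x -> Rg g y -> Rg g (x - y)),
      (* the sum map  (+)_g Rg g -> R  is surjective *)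
      forall x : R, exists (gs : seq (gcarrier G)) (f : gcarrier G -> R),
        (forall g, List.In g gs -> Rg g (f g)) /\ x = \sum_(g <- gs) f g,
      (* ... and injective *)
      forall (gs : seq (gcarrier G)) (f : gcarrier G -> R),
        List.NoDup gs -> (forall g, List.In g gs -> Rg g (f g)) ->
        \sum_(g <- gs) f g = 0 -> forall g, List.In g gs -> f g = 0,
      Rg (gone G) 1 &
      forall g h, (exists a b, Rg g a /\ Rg h b /\ a * b <> 0) ->
        exists k, gop g h = Some k /\
          (forall a b, Rg g a -> Rg h b -> Rg k (a * b))].

(* s is an enumeration, without repetitions (up to extensional equality),
   of all ring homomorphisms R -> C  (C is modelled by algC). *)
Definition hom_enum (R : falgType rat) (s : seq (R -> algC)) : Prop :=
  [/\ forall f, List.In f s -> is_ringhom f,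
      forall i j, (i < j < size s)%N ->
        exists x, nth (fun _ => 0) s i x <> nth (fun _ => 0) s j x &
      forall f : R -> algC, is_ringhom f ->
        exists2 g, List.In g s & forall x, f x = g x].

Definition trace_pairing (R : falgType rat) (s : seq (R -> algC)) (x y : R) : algC :=
  \sum_(sigma <- s) sigma x * (sigma y)^*.

From HB Require Import structures.
From mathcomp Require Import all_boot all_order all_algebra all_field.
From mathcomp Require Import all_fingroup cyclic all_character.
From mathcomp Require Import boolp ring zify.
Set Implicit Arguments. Unset Strict Implicit. Unset Printing Implicit Defensive.
Import Order.TTheory GRing.Theory Num.Theory.
Local Open Scope ring_scope.

(* Enumerations of the embeddings R -> C exist by Dedekind's independence of
   characters (there are at most dim R of them), and <x, x> = sum |sigma x|^2
   vanishes only for x = 0 because a product of number fields has enough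
   embeddings.  For orthogonality, fix an embedding sigma: the grades g with
   sigma(R_g) <> 0 form a finite commutative monoid under the grid operation
   whose only idempotent is 1, hence a finite abelian group.  A character chi
   of it separating gamma from delta twists sigma into the embedding
   x_g |-> chi(g)^k sigma(x_g); twisting permutes the embeddings, so
   <x, y> = sum_sigma (chi(gamma) conj chi(delta))^k sigma(x) conj sigma(y)
   for every k, and averaging over k kills every term. *)

Lemma In_mem (T : eqType) (x : T) (s : seq T) : List.In x s <-> x \in s.
Proof.
elim: s => [|y s IH] //=; rewrite in_cons; split.
  by case=> [->|/IH ->]; rewrite ?eqxx ?orbT.
by case/orP=> [/eqP->|/IH]; [left|right].
Qed.

Lemma uniq_NoDup (T : eqType) (s : seq T) : uniq s -> List.NoDup s.
Proof.
elim: s => [|y s IH] /=; first by constructor.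
by case/andP=> ys us; constructor; [move/In_mem; apply/negP|apply: IH].
Qed.

Lemma In_nth (T : Type) (d : T) (s : seq T) x :
  List.In x s -> exists2 i, (i < size s)%N & nth d s i = x.
Proof.
elim: s => [|y s IH] //= [->|/IH [i si <-]]; first by exists 0%N.
by exists i.+1.
Qed.

Lemma nth_In (T : Type) (d : T) (s : seq T) i :
  (i < size s)%N -> List.In (nth d s i) s.
Proof. by elim: s i => [|y s IH] [|i] //= si; [left|right; apply: IH]. Qed.

Section RingHom.
Variables (A B : nzRingType) (f : A -> B).
Hypothesis hf : is_ringhom f.

Lemma ringhom0 : f 0 = 0.
Proof. by case: hf => fD _ _; apply: (addrI (f 0)); rewrite -fD !addr0. Qed.

Definition ringhom_rmorphism : {rmorphism A -> B} :=
  HB.pack f (GRing.isNmodMorphism.Build A B f (ringhom0, let: And3 fD _ _ := hf in fD))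
            (GRing.isMonoidMorphism.Build A B f (let: And3 _ fM f1 := hf in (f1, fM))).

Lemma ringhomE : f = ringhom_rmorphism. Proof. by []. Qed.

End RingHom.

Lemma ringhom_comp (A B C : nzRingType) (f : A -> B) (g : B -> C) :
  is_ringhom f -> is_ringhom g -> is_ringhom (g \o f).
Proof. by case=> fD fM f1 [gD gM g1]; split=> [x y|x y|] /=; rewrite ?fD ?fM ?f1. Qed.

Lemma ringhomZ (A : falgType rat) (K : numFieldType) (f : A -> K) :
  is_ringhom f -> forall (q : rat) x, f (q *: x) = ratr q * f x.
Proof.
move=> hf q x; rewrite (ringhomE hf) -mulr_algl rmorphM; congr (_ * _).
exact: (fmorph_eq_rat (ringhom_rmorphism hf \o in_alg A)).
Qed.

Definition distinct_funs (A B : nzRingType) (s : seq (A -> B)) : Prop :=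
  forall i j, (i < j < size s)%N ->
    exists x, nth (fun _ => 0) s i x <> nth (fun _ => 0) s j x.

Lemma distinct_funs_nth_inj (A B : nzRingType) (s : seq (A -> B)) i j :
  distinct_funs s -> (i < size s)%N -> (j < size s)%N ->
  nth (fun _ => 0) s i =1 nth (fun _ => 0) s j -> i = j.
Proof.
move=> dist si sj sij; case: (ltngtP i j) => [ij|ji|//].
  by have [|x []] := dist i j; rewrite ?ij.
by have [|x []] := dist j i; rewrite ?ji // => x; rewrite sij.
Qed.

Lemma ringhoms_independent (A : nzRingType) (K : fieldType) (s : seq (A -> K)) :
  (forall f, List.In f s -> is_ringhom f) -> distinct_funs s ->
  forall c : nat -> K, (forall x, \sum_(i < size s) c i * nth (fun _ => 0) s i x = 0) ->
  forall i, (i < size s)%N -> c i = 0.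
Proof.
set d := fun _ => 0.
elim: s => [|f s IH] homs dist c rel i //= si.
have [_ fM f1] := homs f (or_introl erefl).
have homs' g : List.In g s -> is_ringhom g by move=> gs; apply: homs; right.
have dist' : distinct_funs s by move=> i' j' ij; apply: (dist i'.+1 j'.+1).
have rel_tail x : \sum_(i < size s) c i.+1 * nth d s i x = - (c 0%N * f x).
  by apply/eqP; rewrite -addr_eq0 addrC; move: (rel x); rewrite big_ord_recl => ->.
have tail0 j : (j < size s)%N -> c j.+1 = 0.
  move=> js; have [z fz] := dist 0%N j.+1 js.
  (* Artin's trick: the relation at [z * x] minus [f z] times the relation at [x]
     is a shorter relation, with coefficients [c i.+1 * (nth d s i z - f z)]. *)
  have rel' x : \sum_(i < size s) c i.+1 * (nth d s i z - f z) * nth d s i x = 0.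
    transitivity (\sum_(i < size s) c i.+1 * nth d s i (z * x)
                  - f z * \sum_(i < size s) c i.+1 * nth d s i x).
      rewrite mulr_sumr -sumrB; apply: eq_bigr => k _.
      by have [_ -> _] := homs' _ (nth_In d (ltn_ord k)); ring.
    by rewrite !rel_tail fM; ring.
  have /eqP := IH homs' dist' (fun i => c i.+1 * (nth d s i z - f z)) rel' j js.
  by rewrite mulf_eq0 subr_eq0 => /orP [/eqP //|/eqP e]; case: fz; rewrite /= e.
case: i si => [_|j js]; last exact: tail0.
have := rel 1; rewrite big_ord_recl big1 ?addr0 /= ?f1 ?mulr1 // => i _.
by rewrite tail0 ?mul0r.
Qed.

Lemma size_ringhoms_le_dim (A : falgType rat) (K : numFieldType) (s : seq (A -> K)) :
  (forall f, List.In f s -> is_ringhom f) -> distinct_funs s -> (size s <= \dim {:A})%N.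
Proof.
move=> homs dist; pose d : A -> K := fun _ => 0; pose b := vbasis {:A}.
pose M : 'M[K]_(size s, \dim {:A}) := \matrix_(i, j) nth d s i (tnth b j).
suff /eqP <- : row_free M by apply: rank_leq_col.
apply: inj_row_free => v vM0; apply/rowP => i; rewrite mxE.
pose c k := oapp (v 0) 0 (insub k).
rewrite -[v 0 i]/(oapp (v 0) 0 (Some i)) -(valK i).
apply: (ringhoms_independent homs dist (c := c) _ (ltn_ord i)) => x.
rewrite (coord_vbasis (memvf x)).
transitivity (\sum_(j < \dim {:A}) ratr (coord b j x) * (v *m M) 0 j); last first.
  by rewrite vM0 big1 // => j _; rewrite mxE mulr0.
transitivity (\sum_(k < size s) \sum_(j < \dim {:A})
                ratr (coord b j x) * (c k * nth d s k b`_j)).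
  apply: eq_bigr => k _; have hk := homs _ (nth_In d (ltn_ord k)).
  rewrite (ringhomE hk) rmorph_sum -ringhomE mulr_sumr.
  by apply: eq_bigr => j _; rewrite ringhomZ //; ring.
rewrite exchange_big /=; apply: eq_bigr => j _; rewrite !mxE mulr_sumr.
by apply: eq_bigr => k _; rewrite mxE /c valK (tnth_nth 0) /=; ring.
Qed.

Lemma hom_enum_exists (A : falgType rat) : exists s : seq (A -> algC), hom_enum s.
Proof.
pose P n := `[< exists s : seq (A -> algC),
  [/\ forall f, List.In f s -> is_ringhom f, distinct_funs s & size s = n] >].
have P0 : exists n, P n.
  by exists 0%N; apply/asboolP; exists [::]; split=> // i j /andP[].
have Pdim n : P n -> (n <= \dim {:A})%N.
  by case/asboolP=> s [homs dist <-]; apply: size_ringhoms_le_dim.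
case: (ex_maxnP P0 Pdim) => n /asboolP[s [homs dist sz]] maxn.
exists s; split=> // f hf.
apply: contrapT => fs; have /maxn : P n.+1; last by rewrite ltnn.
apply/asboolP; exists (f :: s); split; last by rewrite /= sz.
- by move=> g [<-|]; [|apply: homs].
case=> [|i] [|j] //= ij; last exact: dist.
apply: contrapT => /forallNP same; apply: fs; exists (nth (fun _ => 0) s j).
  exact: nth_In.
by move=> x; apply: contrapT; apply: same.
Qed.

Lemma hom_enum_sum_reindex (A : falgType rat) (s : seq (A -> algC))
    (u : (A -> algC) -> A -> algC) (F : (A -> algC) -> algC) :
  hom_enum s ->
  (forall f, is_ringhom f -> is_ringhom (u f)) ->
  (forall f f', is_ringhom f -> is_ringhom f' -> u f =1 u f' -> f =1 f') ->
  (forall f f', f =1 f' -> F f = F f') ->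
  \sum_(f <- s) F (u f) = \sum_(f <- s) F f.
Proof.
move=> [homs dist complete] u_hom u_inj F_ext; pose d : A -> algC := fun _ => 0.
rewrite [LHS](big_nth d) [RHS](big_nth d) !big_mkord.
have s_hom (i : 'I_(size s)) : is_ringhom (nth d s i) by apply/homs/nth_In.
have u_s (i : 'I_(size s)) : exists j : 'I_(size s), u (nth d s i) =1 nth d s j.
  have [g gs ug] := complete _ (u_hom _ (s_hom i)); have [j js gj] := In_nth d gs.
  by exists (Ordinal js) => x; rewrite ug -gj.
pose pi (i : 'I_(size s)) := sval (cid (u_s i)).
have piP (i : 'I_(size s)) : u (nth d s i) =1 nth d s (pi i) := svalP (cid (u_s i)).
have pi_inj : injective pi.
  move=> i i' ii'; apply/val_inj/(distinct_funs_nth_inj dist); rewrite ?ltn_ord //.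
  by apply: u_inj (s_hom i) (s_hom i') _ => x; rewrite !piP ii'.
by rewrite [RHS](reindex_inj pi_inj) /=; apply: eq_bigr => i _; apply/F_ext/piP.
Qed.

Lemma fieldExt_primitive_element (K : fieldExtType rat) :
  exists z : K, <<1; z>>%VS = fullv.
Proof.
have sep (E : {subfield K}) (x : K) : separable_element E x.
  by apply: pcharf0_separable => p; rewrite pchar_lalg; apply: pchar_num.
have adjoin_seq (xs : seq K) : exists z : K, <<1 & xs>>%VS = <<1; z>>%VS.
  elim/last_ind: xs => [|xs x [z xsz]]; first by exists 0; rewrite Fadjoin_nil Fadjoin0.
  by rewrite adjoin_rcons xsz; apply: Primitive_Element_Theorem.
have [z xsz] := adjoin_seq (vbasis fullv); exists z; rewrite -xsz.
apply/eqP; rewrite eqEsubv subvf /= -{1}(span_basis (vbasisP fullv)).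
by apply/span_subvP; apply: seqv_sub_adjoin.
Qed.

Lemma fieldExt_ringhom_algC (K : fieldExtType rat) :
  exists tau : K -> algC, is_ringhom tau.
Proof.
have [z Kz] := fieldExt_primitive_element K.
pose ev : {rmorphism {poly rat} -> K} := horner_eval z \o map_poly (in_alg K).
have rep y : exists q, y = ev q by apply/Fadjoin1_polyP; rewrite Kz memvf.
have [p minpE] : exists p, minPoly 1 z = map_poly (in_alg K) p.
  by apply/polyOver1P; apply: minPolyOver.
have [b pb] : exists b, root (map_poly ratr p : {poly algC}) b.
  apply/closed_rootP; rewrite size_map_poly -(size_map_poly (in_alg K)) -minpE.
  have := root_size_gt1 (monic_neq0 (monic_minPoly 1 z)) (root_minPoly 1 z).
  by case: (size _) => [|[|n]].
pose evb : {rmorphism {poly rat} -> algC} := horner_eval b \o map_poly ratr.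
have evb0 q : ev q = 0 -> evb q = 0.
  move=> qz; have : minPoly 1 z %| map_poly (in_alg K) q.
    by apply: minPoly_dvdp; [apply/polyOver1P; exists q|apply/rootP].
  rewrite minpE dvdp_map => /dvdpP [r qE].
  by rewrite /= qE rmorphM /= horner_evalE hornerM (rootP pb) mulr0.
pose tau y := evb (sval (cid (rep y))).
have tauE q : tau (ev q) = evb q.
  rewrite /tau; case: cid => q' e; apply/eqP; rewrite -subr_eq0 -rmorphB.
  by apply/eqP; apply: evb0; rewrite rmorphB -e subrr.
exists tau; split.
- move=> x y; have [qx ->] := rep x; have [qy ->] := rep y.
  by rewrite -rmorphD !tauE rmorphD.
- move=> x y; have [qx ->] := rep x; have [qy ->] := rep y.
  by rewrite -rmorphM !tauE rmorphM.
- by rewrite -(rmorph1 ev) tauE rmorph1.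
Qed.

Lemma trace_pairing0l (A : falgType rat) (s : seq (A -> algC)) y :
  hom_enum s -> trace_pairing s 0 y = 0.
Proof.
case=> homs _ _; rewrite /trace_pairing.
elim: s homs => [|f s IH] homs; first by rewrite big_nil.
rewrite big_cons (ringhom0 (homs f (or_introl erefl))) mul0r add0r.
by apply: IH => g gs; apply: homs; right.
Qed.

Section ProductOfNumberFields.
Variable R : falgType rat.
Hypothesis hR : iso_prod_number_fields R.

Lemma iso_prod_number_fields_mulC : commutative (@GRing.mul R).
Proof.
have [n [K [phi [homs inj _]]]] := hR.
by move=> x y; apply: inj => i; have [_ phiM _] := homs i; rewrite !phiM mulrC.
Qed.

Lemma ringhom_algC_separates (x : R) :
  x != 0 -> exists2 sig : R -> algC, is_ringhom sig & sig x != 0.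
Proof.
have [n [K [phi [homs inj _]]]] := hR; move=> x0.
have [i phix] : exists i, phi i x != 0.
  apply: contrapT => /forallNP phi0; case/eqP: x0; apply: inj => i.
  by rewrite ringhom0 //; apply/eqP/negPn/negP/phi0.
have [tau htau] := fieldExt_ringhom_algC (K i).
exists (tau \o phi i); first exact: ringhom_comp.
by rewrite /= (ringhomE htau) fmorph_eq0.
Qed.

Lemma trace_pairing_self_eq0 (s : seq (R -> algC)) (x : R) :
  hom_enum s -> trace_pairing s x x = 0 -> x = 0.
Proof.
case=> _ _ complete; apply: contra_eq => x0.
have [sig hsig sigx] := ringhom_algC_separates x0.
have [f fs sigf] := complete sig hsig; have [i si fi] := In_nth (fun _ => 0) fs.
rewrite /trace_pairing (big_nth (fun _ => 0)) big_mkord psumr_eq0; last first.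
  by move=> j _; apply: mul_conjC_ge0.
apply/allPn; exists (Ordinal si); first exact: mem_index_enum.
by rewrite fi mul_conjC_eq0 -sigf.
Qed.

End ProductOfNumberFields.

Lemma unity_root_mul_conjC (z : algC) n : (0 < n)%N -> z ^+ n = 1 -> z * z^* = 1.
Proof.
move=> n_gt0 zn1; have /eqP : `|z| ^+ n = 1 by rewrite -normrX zn1 normr1.
by rewrite pexpr_eq1 // => /eqP z1; rewrite -normCK z1 expr1n.
Qed.

Lemma sum_expr_unity_root (K : idomainType) (c : K) n :
  c ^+ n = 1 -> c != 1 -> \sum_(k < n) c ^+ k = 0.
Proof.
move=> cn1 c1; have /esym/eqP := subrX1 c n; rewrite cn1 subrr mulf_eq0 subr_eq0.
by rewrite (negbTE c1) => /eqP.
Qed.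

Section FiniteMonoid.
Variables (T : finType) (mul : T -> T -> T) (one : T).
Hypotheses (mulA : associative mul) (mul1 : left_id one mul) (mulC : commutative mul).
Hypothesis idem1 : forall t, mul t t = t -> t = one.

Lemma finite_monoid_inverse t : exists u, mul u t == one.
Proof.
pose pw n := iter n (mul t) one.
have pwD m n : pw (m + n)%N = mul (pw m) (pw n).
  by elim: m => [|m IH]; rewrite ?add0n /= ?mul1 // IH mulA.
have [i [j [ij pwij]]] : exists i j, (i < j)%N /\ pw i = pw j.
  pose f (k : 'I_#|T|.+1) := pw k.
  have /injectivePn [a [b ab fab]] : ~~ injectiveb f.
    by apply/injectiveP => /leq_card; rewrite card_ord ltnn.
  case: (ltngtP a b) => [lt|lt|/val_inj e]; [by exists a, b|by exists b, a|].
  by rewrite e eqxx in ab.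
(* Beyond [i] the powers of [t] are periodic of period [p = j - i], so the power
   [m = i.+1 * p] is idempotent. *)
set p := (j - i)%N; set m := (i.+1 * p)%N.
have pw_period q : pw (m + q * p)%N = pw m.
  elim: q => [|q IH]; first by rewrite addn0.
  have -> : (m + q.+1 * p = (m - i + q * p) + j)%N by rewrite /m /p; nia.
  by rewrite pwD -pwij -pwD -IH; congr pw; rewrite /m /p; nia.
have pwm1 : pw m = one by apply: idem1; rewrite -pwD; apply: pw_period i.+1.
have m_gt0 : (0 < m)%N by rewrite muln_gt0 subn_gt0 ij.
exists (pw m.-1); apply/eqP.
have pw1 : pw 1%N = t by rewrite /= mulC mul1.
by rewrite -[X in mul _ X]pw1 -pwD addn1 prednK.
Qed.

Definition monoid_group : Type := T.
Definition monoid_inv (t : T) : T := xchoose (finite_monoid_inverse t).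

Lemma monoid_mulV : left_inverse one monoid_inv mul.
Proof. by move=> t; apply/eqP/(xchooseP (finite_monoid_inverse t)). Qed.

HB.instance Definition _ := Finite.on monoid_group.
HB.instance Definition _ :=
  Finite_isGroup.Build monoid_group mulA mul1 monoid_mulV.

Lemma finite_monoid_character (x y : T) : x != y ->
  exists chi : T -> algC, [/\ chi one = 1, forall a b, chi (mul a b) = chi a * chi b,
                               chi x != chi y & forall a, chi a ^+ #|T| = 1].
Proof.
move=> xy; pose G := [set: monoid_group].
have abG : abelian G by apply/centsP => a _ b _; apply: mulC.
pose z : monoid_group := mul x (monoid_inv y).
have z1 : z != 1%g.
  apply: contra xy => /eqP z1; apply/eqP.
  by rewrite -[x]mul1 -(monoid_mulV y) mulC mulA -/z [z]z1 mul1.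
have /forallPn [i zi] : ~~ [forall i, z \in cfker 'chi[G]_i].
  apply: contra z1 => /forallP z_ker; apply/eqP/set1gP.
  by rewrite -(TI_cfker_irr G); apply/bigcapP.
have lin : 'chi[G]_i \is a linear_char by apply/char_abelianP.
exists (fun a => 'chi[G]_i a); split.
- exact: lin_char1.
- by move=> a b; apply: (lin_charM lin); rewrite inE.
- apply: contra zi => /eqP chixy; rewrite cfkerEirr inE.
  have -> : z = ((x : monoid_group) * (y : monoid_group)^-1)%g by [].
  by rewrite !(lin_charM lin) ?inE // chixy -(lin_charM lin) ?inE // mulgV.
- move=> a; have -> : #|T| = #|G|.
  by rewrite cardsT; apply: (@bij_eq_card T monoid_group id); exists id.
  by rewrite -(lin_charX lin) ?inE // expg_cardG ?inE // lin_char1.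
Qed.

End FiniteMonoid.

Lemma sum_pred1_uniq (T : eqType) (V : nmodType) (L : seq T) (g : T) (F : T -> V) :
  uniq L -> g \in L -> \sum_(h <- L | h == g) F h = F g.
Proof. by move=> uL gL; rewrite -big_filter filter_pred1_uniq // big_seq1. Qed.

Lemma sum_regroup (T : eqType) (V : nmodType) (s L : seq T) (F : T -> V) :
  uniq L -> {subset s <= L} ->
  \sum_(g <- s) F g = \sum_(h <- L) \sum_(g <- s | g == h) F g.
Proof.
move=> uL sL; under [RHS]eq_bigr => h _ do rewrite big_mkcond.
rewrite exchange_big /=; apply: eq_big_seq => g gs.
rewrite -big_mkcond /= (eq_bigl (fun h => h == g)) => [|h]; last by rewrite eq_sym.
by rewrite sum_pred1_uniq // sL.
Qed.

HB.instance Definition _ (G : grid) := gen_eqMixin (gcarrier G).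
HB.instance Definition _ (G : grid) := gen_choiceMixin (gcarrier G).

Section Grading.
Variables (R : falgType rat) (G : grid) (Rg : gcarrier G -> R -> Prop).
Hypothesis hgr : grid_grading Rg.
Local Notation gc := (gcarrier G).

Lemma grade0 g : Rg g 0.
Proof. by case: hgr => sub _ _ _ _; case: (sub g). Qed.

Lemma gradeB g x y : Rg g x -> Rg g y -> Rg g (x - y).
Proof. by case: hgr => sub _ _ _ _; case: (sub g) => _; apply. Qed.

Lemma gradeN g x : Rg g x -> Rg g (- x).
Proof. by move=> gx; rewrite -sub0r; apply: gradeB => //; apply: grade0. Qed.

Lemma gradeD g x y : Rg g x -> Rg g y -> Rg g (x + y).
Proof. by move=> gx gy; rewrite -[y]opprK; apply/gradeB/gradeN. Qed.

Lemma grade_sum (I : Type) (r : seq I) (P : pred I) (F : I -> R) g :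
  (forall i, P i -> Rg g (F i)) -> Rg g (\sum_(i <- r | P i) F i).
Proof.
move=> gF; elim/big_rec: _ => [|i x Pi gx]; first exact: grade0.
by apply: gradeD => //; apply: gF.
Qed.

Lemma gradeMz g x (z : int) : Rg g x -> Rg g (x *~ z).
Proof.
move=> gx; have gxn n : Rg g (x *+ n).
  by elim: n => [|n IH]; rewrite ?mulr0n ?mulrS; [apply: grade0|apply: gradeD].
by case: z => n; rewrite ?NegzE ?mulrNz; [apply: gxn|apply/gradeN/gxn].
Qed.

Lemma grade1 : Rg (gone G) 1.
Proof. by case: hgr. Qed.

Lemma grade_mul g h a b : Rg g a -> Rg h b -> a * b != 0 ->
  exists2 k, gop g h = Some k & Rg k (a * b).
Proof.
case: hgr => _ _ _ _ mulG ga hb ab0.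
have [|k [ghk gh_k]] := mulG g h; first by exists a, b; split=> //; split=> //; apply/eqP.
by exists k => //; apply: gh_k.
Qed.

Lemma homogeneous_sum_eq0 (l : seq gc) (F : gc -> R) : uniq l ->
  (forall g, g \in l -> Rg g (F g)) -> \sum_(g <- l) F g = 0 ->
  forall g, g \in l -> F g = 0.
Proof.
case: hgr => _ _ indep _ _ ul lF sum0 g /In_mem gl.
by apply: (indep l F (uniq_NoDup ul)) => // g' /In_mem; apply: lF.
Qed.

Lemma grade_unique e e' a : a != 0 -> Rg e a -> Rg e' a -> e = e'.
Proof.
move=> a0 ea e'a; apply: contra_notP (negP a0) => ee'; apply/eqP.
have {}ee' : e != e' by apply/eqP.
pose F g := if g == e then a else - a.
have uee' : uniq [:: e; e'] by rewrite /= inE ee'.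
have gradeF g : g \in [:: e; e'] -> Rg g (F g).
  by rewrite !inE /F => /orP[] /eqP->; rewrite ?eqxx // eq_sym (negbTE ee'); apply: gradeN.
have sumF : \sum_(g <- [:: e; e']) F g = 0.
  by rewrite !big_cons big_nil /F eqxx eq_sym (negbTE ee') addr0 subrr.
by have := homogeneous_sum_eq0 uee' gradeF sumF (mem_head e _); rewrite /F eqxx.
Qed.

Lemma grade_decomposition (L0 : seq gc) (x : R) : uniq L0 ->
  exists L1 (F : gc -> R), [/\ uniq (L0 ++ L1), forall g, Rg g (F g)
                             & x = \sum_(g <- L0 ++ L1) F g].
Proof.
case: hgr => _ decomp _ _ _ uL0; have [gs [f [gs_f ->]]] := decomp x.
pose L1 := undup [seq g <- gs | g \notin L0].
have uL : uniq (L0 ++ L1).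
  rewrite cat_uniq uL0 undup_uniq andbT; apply/hasPn => g.
  by rewrite mem_undup mem_filter => /andP[].
exists L1, (fun h => \sum_(g <- gs | g == h) f g); split=> //.
- move=> h; rewrite big_seq_cond; apply: grade_sum => g /andP[gsg /eqP <-].
  exact/gs_f/In_mem.
apply: sum_regroup => // g gsg.
by rewrite mem_cat mem_undup mem_filter gsg andbT orbN.
Qed.

Lemma gradeZ e a (q : rat) : Rg e a -> Rg e (q *: a).
Proof.
move=> ea; have [L1 [F [uL gF qaE]]] := grade_decomposition (q *: a) (isT : uniq [:: e]).
(* Clearing the denominator of [q] compares the decomposition of [q *: a]
   with that of [a *~ numq q]. *)
pose H h := F h *~ denq q - (if h == e then a *~ numq q else 0).
have gH h : h \in e :: L1 -> Rg h (H h).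
  move=> _; apply: gradeB; first exact: gradeMz.
  by case: eqP => [->|_]; [apply: gradeMz|apply: grade0].
have sumH : \sum_(h <- e :: L1) H h = 0.
  rewrite sumrB -big_mkcond /= sum_pred1_uniq ?mem_head // -mulrz_suml -qaE.
  by rewrite -!scaler_int scalerA mulrC -numqE subrr.
have F_L1 h : h \in L1 -> F h = 0.
  move=> hL1; have he : h != e by apply: contraTneq hL1 => ->; case/andP: uL.
  have /eqP := homogeneous_sum_eq0 uL gH sumH (mem_behead (s := e :: L1) hL1).
  rewrite /H (negbTE he) subr0 -scaler_int scaler_eq0 intr_eq0.
  by rewrite (negbTE (denq_neq0 q)) => /eqP.
by rewrite qaE big_cons big1_seq ?addr0 // => h /andP[_ /F_L1].
Qed.

Lemma size_support_le_dim (l : seq gc) : uniq l ->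
  (forall g, g \in l -> exists2 a, Rg g a & a != 0) -> (size l <= \dim {:R})%N.
Proof.
move=> ul nz_l.
have /choice [a la] : forall g, exists a, g \in l -> Rg g a /\ a != 0.
  move=> g; case: (boolP (g \in l)) => [/nz_l [a ga a0]|_]; last by exists 0.
  by exists a.
have free_la : free (map_tuple a (in_tuple l)).
  apply/freeP => k lin_k i.
  pose c (j : nat) : rat := oapp k 0 (insub j).
  pose F g := c (index g l) *: a g.
  have sumF : \sum_(g <- l) F g = 0.
    rewrite (big_nth (gone G)) big_mkord -[RHS]lin_k; apply: eq_bigr => j _.
    by rewrite /F index_uniq // /c valK /= (nth_map (gone G)).
  have il : nth (gone G) l i \in l by apply: mem_nth.
  have /eqP := homogeneous_sum_eq0 ul (fun g gl => gradeZ _ (proj1 (la g gl))) sumF il.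
  by rewrite scaler_eq0 (negbTE (proj2 (la _ il))) orbF /c index_uniq // valK => /eqP.
rewrite -(size_map a) -(eqP free_la) /=.
exact: leq_trans (dimvS (subvf <<map a l>>%VS)).
Qed.

Lemma support_exists : exists S : seq gc,
  uniq S /\ forall g a, Rg g a -> a != 0 -> g \in S.
Proof.
pose P n := `[< exists l : seq gc,
  [/\ uniq l, forall g, g \in l -> exists2 a, Rg g a & a != 0 & size l = n] >].
have P0 : exists n, P n by exists 0%N; apply/asboolP; exists [::].
have Pdim n : P n -> (n <= \dim {:R})%N.
  by case/asboolP => l [ul nz_l <-]; apply: size_support_le_dim.
case: (ex_maxnP P0 Pdim) => n /asboolP[l [ul nz_l sz]] maxn.
exists l; split=> // g a ga a0; apply: contraT => gl.
have /maxn : P n.+1; last by rewrite ltnn.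
apply/asboolP; exists (g :: l); split; rewrite /= ?gl ?sz //.
by move=> g'; rewrite inE => /orP[/eqP->|/nz_l //]; exists a.
Qed.

Definition grade_support : seq gc := sval (cid support_exists).

Lemma grade_support_uniq : uniq grade_support.
Proof. exact: (proj1 (svalP (cid support_exists))). Qed.

Lemma mem_grade_support g a : Rg g a -> a != 0 -> g \in grade_support.
Proof. exact: (proj2 (svalP (cid support_exists))). Qed.

Lemma grade_notin_support g a : Rg g a -> g \notin grade_support -> a = 0.
Proof. by move=> ga; apply: contraNeq; apply: mem_grade_support. Qed.

Lemma support_decomposition w : exists F : gc -> R,
  (forall g, Rg g (F g)) /\ w = \sum_(g <- grade_support) F g.
Proof.
have [L1 [F [uL gF ->]]] := grade_decomposition w grade_support_uniq.
exists F; split=> //; rewrite big_cat /= [X in _ + X]big1_seq ?addr0 // => h /andP[_ hL1].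
apply: grade_notin_support (gF h) _.
by move: uL; rewrite cat_uniq => /and3P[_ /hasPn /(_ h hL1)].
Qed.

Lemma support_decomposition_unique (F F' : gc -> R) :
  (forall g, Rg g (F g)) -> (forall g, Rg g (F' g)) ->
  \sum_(g <- grade_support) F g = \sum_(g <- grade_support) F' g -> F =1 F'.
Proof.
move=> gF gF' FF' g; case: (boolP (g \in grade_support)) => gS; last first.
  by rewrite (grade_notin_support (gF g) gS) (grade_notin_support (gF' g) gS).
apply/eqP; rewrite -subr_eq0; apply/eqP.
apply: (homogeneous_sum_eq0 (F := fun g => F g - F' g)) grade_support_uniq _ _ _ gS.
  by move=> h _; apply: gradeB.
by rewrite sumrB FF' subrr.
Qed.

Definition component (g : gc) (w : R) : R := sval (cid (support_decomposition w)) g.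

Lemma component_grade g w : Rg g (component g w).
Proof. exact: (proj1 (svalP (cid (support_decomposition w)))). Qed.

Lemma component_sum w : w = \sum_(g <- grade_support) component g w.
Proof. exact: (proj2 (svalP (cid (support_decomposition w)))). Qed.

Lemma componentD g w w' : component g (w + w') = component g w + component g w'.
Proof.
move: g; apply: support_decomposition_unique => [g|g|]; first exact: component_grade.
  by apply: gradeD; apply: component_grade.
by rewrite -component_sum big_split /= -!component_sum.
Qed.

Lemma component_homogeneous g e a : Rg e a -> component g a = if g == e then a else 0.
Proof.
move=> ea; move: g; apply: support_decomposition_unique => [g|g|].
- exact: component_grade.
- by case: eqP => [->|_] //; apply: grade0.
rewrite -component_sum -big_mkcond; case: (eqVneq a 0) => [a0|a0].
  by rewrite a0 big1.
by rewrite sum_pred1_uniq ?grade_support_uniq ?(mem_grade_support ea).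
Qed.

Definition active (sig : R -> algC) (g : gc) : Prop := exists2 a, Rg g a & sig a != 0.

Section Twist.
Variables (sig : R -> algC) (chi : gc -> algC).
Hypothesis hsig : is_ringhom sig.

Definition twist (w : R) : algC :=
  \sum_(g <- grade_support) chi g * sig (component g w).

Lemma twist_homogeneous e a : Rg e a -> twist a = chi e * sig a.
Proof.
move=> ea; case: (eqVneq a 0) => [a0|a0].
  subst a; rewrite (ringhom0 hsig) mulr0 /twist big1 // => g _.
  by rewrite (component_homogeneous g ea) if_same (ringhom0 hsig) mulr0.
rewrite /twist (bigD1_seq e) ?grade_support_uniq ?(mem_grade_support ea) //=.
rewrite (component_homogeneous e ea) eqxx big1_seq ?addr0 // => g /andP[ge _].
by rewrite (component_homogeneous g ea) (negbTE ge) (ringhom0 hsig) mulr0.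
Qed.

Lemma twistD x y : twist (x + y) = twist x + twist y.
Proof.
have [sigD _ _] := hsig.
by rewrite /twist -big_split; apply: eq_bigr => g _; rewrite componentD sigD mulrDr.
Qed.

Lemma twist_sum (I : Type) (r : seq I) (F : I -> R) :
  twist (\sum_(i <- r) F i) = \sum_(i <- r) twist (F i).
Proof.
have twist0 : twist 0 = 0.
  by rewrite (twist_homogeneous (grade0 (gone G))) (ringhom0 hsig) mulr0.
by elim/big_rec2: _ => [|i y x _ <-]; rewrite ?twist0 // twistD.
Qed.

Hypothesis chi1 : chi (gone G) = 1.
Hypothesis chiM : forall g h k, active sig g -> active sig h ->
  gop g h = Some k -> chi k = chi g * chi h.

Lemma twistM_homogeneous g h a b : Rg g a -> Rg h b -> twist (a * b) = twist a * twist b.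
Proof.
have [_ sigM _] := hsig; move=> ga hb.
rewrite (twist_homogeneous ga) (twist_homogeneous hb) mulrACA -sigM.
case: (eqVneq (a * b) 0) => [->|ab0].
  by rewrite (twist_homogeneous (grade0 (gone G))) (ringhom0 hsig) !mulr0.
have [k ghk kab] := grade_mul ga hb ab0; rewrite (twist_homogeneous kab).
have [sa0|sa] := eqVneq (sig a) 0; first by rewrite sigM sa0 !(mulr0, mul0r).
have [sb0|sb] := eqVneq (sig b) 0; first by rewrite sigM sb0 !(mulr0, mul0r).
by rewrite (chiM _ _ ghk) //; [exists a|exists b].
Qed.

Lemma twist_ringhom : is_ringhom twist.
Proof.
have [_ _ sig1] := hsig; split; first exact: twistD.
  move=> x y; rewrite [in LHS](component_sum x) [in LHS](component_sum y).
  rewrite mulr_suml twist_sum.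
  rewrite [in RHS](component_sum x) [in RHS](component_sum y) !twist_sum mulr_suml.
  apply: eq_bigr => g _; rewrite mulr_sumr twist_sum mulr_sumr; apply: eq_bigr => h _.
  by apply: twistM_homogeneous; apply: component_grade.
by rewrite (twist_homogeneous grade1) chi1 sig1 mulr1.
Qed.

End Twist.

(* An exponent common to the groups of active grades of all embeddings. *)
Definition character_exponent : nat := (size grade_support)`!.

Definition separating_character (P : gc -> Prop) (chi : gc -> algC) (gam del : gc) :=
  [/\ chi (gone G) = 1,
      forall g h k, P g -> P h -> gop g h = Some k -> chi k = chi g * chi h,
      P gam -> P del -> gam <> del -> chi gam != chi del &
      forall g, P g -> chi g ^+ character_exponent = 1].

Definition gmul (g h : gc) : gc := odflt (gone G) (gop g h).

Section ActiveMonoid.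
Variable sig : R -> algC.
Hypotheses (hsig : is_ringhom sig) (mulRC : commutative (@GRing.mul R)).

Lemma gmulP g h a b : Rg g a -> Rg h b -> sig a != 0 -> sig b != 0 ->
  [/\ gop g h = Some (gmul g h), Rg (gmul g h) (a * b) & sig (a * b) != 0].
Proof.
have [_ sigM _] := hsig; move=> ga hb sa sb.
have sab : sig (a * b) != 0 by rewrite sigM mulf_neq0.
have ab0 : a * b != 0 by apply: contraNneq sab => ->; rewrite (ringhom0 hsig).
by have [k ghk kab] := grade_mul ga hb ab0; rewrite /gmul ghk.
Qed.

Lemma gmul_active g h : active sig g -> active sig h ->
  gop g h = Some (gmul g h) /\ active sig (gmul g h).
Proof.
move=> [a ga sa] [b hb sb]; have [ghk kab sab] := gmulP ga hb sa sb.
by split=> //; exists (a * b).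
Qed.

Lemma active1 : active sig (gone G).
Proof.
by have [_ _ sig1] := hsig; exists 1; rewrite ?sig1 ?oner_neq0 //; apply: grade1.
Qed.

Lemma gmul1 g : gmul (gone G) g = g.
Proof. by rewrite /gmul gop1s. Qed.

Lemma gmulC g h : active sig g -> active sig h -> gmul g h = gmul h g.
Proof.
move=> [a ga sa] [b hb sb].
have [_ ab sab] := gmulP ga hb sa sb; have [_ ba _] := gmulP hb ga sb sa.
apply: (@grade_unique _ _ (a * b)) => //; last by rewrite mulRC.
by apply: contraNneq sab => ->; rewrite (ringhom0 hsig).
Qed.

Lemma gmulA g h k : active sig g -> active sig h -> active sig k ->
  gmul (gmul g h) k = gmul g (gmul h k).
Proof.
move=> [a ga sa] [b hb sb] [c kc sc].
have [_ ab sab] := gmulP ga hb sa sb; have [_ bc sbc] := gmulP hb kc sb sc.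
have [_ ab_c sabc] := gmulP ab kc sab sc; have [_ a_bc _] := gmulP ga bc sa sbc.
apply: (@grade_unique _ _ (a * b * c)) => //; last by rewrite -mulrA.
by apply: contraNneq sabc => ->; rewrite (ringhom0 hsig).
Qed.

Lemma gmul_idem g : active sig g -> gmul g g = g -> g = gone G.
Proof.
move=> [a ga sa] gg; have [ggk _ _] := gmulP ga ga sa sa.
by apply: gop_idem; rewrite ggk gg.
Qed.

Definition active_grades : seq gc := [seq g <- grade_support | `[< active sig g >]].

Lemma active_gradesP g : reflect (active sig g) (g \in active_grades).
Proof.
rewrite mem_filter; apply: (iffP andP) => [[/asboolP //]|ag]; split; first exact/asboolP.
have [a ga sa] := ag; apply: (mem_grade_support ga).
by apply: contraNneq sa => ->; rewrite (ringhom0 hsig).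
Qed.

Definition active_type := seq_sub active_grades.

Lemma val_active (t : active_type) : active sig (val t).
Proof. exact/active_gradesP/valP. Qed.

Definition active_mul (t u : active_type) : active_type :=
  insubd t (gmul (val t) (val u)).

Lemma val_active_mul t u : val (active_mul t u) = gmul (val t) (val u).
Proof.
rewrite /active_mul insubdK //; apply/active_gradesP.
by case: (gmul_active (val_active t) (val_active u)).
Qed.

Definition active_one : active_type := Sub (gone G) (introT (active_gradesP _) active1).

Lemma active_mulA : associative active_mul.
Proof.
move=> t u v; apply: val_inj.
by rewrite !val_active_mul gmulA //; apply: val_active.
Qed.

Lemma active_mul1 : left_id active_one active_mul.
Proof. by move=> t; apply: val_inj; rewrite val_active_mul SubK gmul1. Qed.

Lemma active_mulC : commutative active_mul.
Proof.
move=> t u; apply: val_inj.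
by rewrite !val_active_mul gmulC //; apply: val_active.
Qed.

Lemma active_mul_idem t : active_mul t t = t -> t = active_one.
Proof.
move=> tt; apply: val_inj; apply: gmul_idem; first exact: val_active.
by rewrite -val_active_mul tt.
Qed.

Lemma active_character_exists gam del :
  exists chi, separating_character (active sig) chi gam del.
Proof.
have [[ag [ad gd]]|] :=
  pselect (active sig gam /\ active sig del /\ gam <> del); last first.
  move=> not_gd; exists (fun _ => 1); split=> [||ag ad gd|g _]; rewrite ?mulr1 ?expr1n //.
  by case: not_gd.
pose in_active g (gP : active sig g) : active_type := Sub g (introT (active_gradesP _) gP).
have tgd : in_active _ ag != in_active _ ad by apply/eqP => /(congr1 val).
have [chi [chi1 chiM chigd chiN]] :=
  finite_monoid_character active_mulA active_mul1 active_mulC active_mul_idem tgd.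
have insub_active g (gP : active sig g) : insub g = Some (in_active _ gP) by apply: insubT.
exists (fun g => oapp chi 1 (insub g)); split.
- by rewrite (insub_active _ active1).
- move=> g h k ag' ah; case: (gmul_active ag' ah) => -> ak [<-].
  rewrite (insub_active _ ag') (insub_active _ ah) (insub_active _ ak) /= -chiM.
  by congr chi; apply: val_inj; rewrite val_active_mul /=.
- by move=> _ _ _; rewrite (insub_active _ ag) (insub_active _ ad).
move=> g ag'; rewrite (insub_active _ ag') /=.
have /dvdnP[m ->] : (#|{: active_type}| %| character_exponent)%N.
  apply: dvdn_fact; rewrite (card_seq_sub (filter_uniq _ grade_support_uniq)).
  rewrite -has_predT size_filter count_size andbT.
  by apply/hasP; exists (gone G) => //; apply/active_gradesP/active1.
by rewrite mulnC exprM chiN expr1n.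
Qed.

End ActiveMonoid.

Section Orthogonality.
Hypothesis mulRC : commutative (@GRing.mul R).
Variables gam del : gc.

(* The character depends on [sig] only through [active sig]; this is what makes
   [twist_pow k] injective. *)
Definition chosen_character (P : gc -> Prop) : gc -> algC :=
  if pselect (exists chi, separating_character P chi gam del) is left h
  then sval (cid h) else fun _ => 1.

Lemma chosen_characterP sig : is_ringhom sig ->
  separating_character (active sig) (chosen_character (active sig)) gam del.
Proof.
move=> hsig; rewrite /chosen_character; case: pselect => [h|]; first exact: (svalP (cid h)).
by case; apply: active_character_exists.
Qed.

Local Notation chi_of sig := (chosen_character (active sig)).

Definition twist_pow (k : nat) (sig : R -> algC) : R -> algC :=
  twist sig (fun g => chi_of sig g ^+ k).

Lemma twist_pow_homogeneous k sig e a : is_ringhom sig -> Rg e a ->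
  twist_pow k sig a = chi_of sig e ^+ k * sig a.
Proof. by move=> hsig ea; rewrite /twist_pow (twist_homogeneous _ hsig ea). Qed.

Lemma twist_pow_ringhom k sig : is_ringhom sig -> is_ringhom (twist_pow k sig).
Proof.
move=> hsig; have [chi1 chiM _ _] := chosen_characterP hsig.
apply: twist_ringhom => //; first by rewrite chi1 expr1n.
by move=> g h k' ag ah ghk; rewrite (chiM g h k') // exprMn.
Qed.

Lemma chosen_character_neq0 sig g : is_ringhom sig -> active sig g -> chi_of sig g != 0.
Proof.
move=> hsig ag; have [_ _ _ chiN] := chosen_characterP hsig.
apply/eqP => chi0; move: (chiN g ag); rewrite chi0 expr0n eqn0Ngt fact_gt0 /=.
by move/eqP; rewrite eq_sym oner_eq0.
Qed.

Lemma active_twist_pow k sig : is_ringhom sig -> active (twist_pow k sig) = active sig.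
Proof.
move=> hsig; apply/funext => g; apply/propext; split=> [[a ga]|[a ga sa]].
  by rewrite (twist_pow_homogeneous _ hsig ga) mulf_eq0 negb_or => /andP[_ sa]; exists a.
exists a => //; rewrite (twist_pow_homogeneous _ hsig ga) mulf_neq0 // expf_neq0 //.
by apply: chosen_character_neq0 => //; exists a.
Qed.

Lemma twist_pow_inj k sig sig' : is_ringhom sig -> is_ringhom sig' ->
  twist_pow k sig =1 twist_pow k sig' -> sig =1 sig'.
Proof.
move=> hsig hsig' tt'.
have act : active sig = active sig'.
  rewrite -(active_twist_pow k hsig) -(active_twist_pow k hsig').
  by congr active; apply/funext.
move=> w; rewrite (component_sum w) (ringhomE hsig) (ringhomE hsig') !rmorph_sum -!ringhomE.
apply: eq_bigr => g _; set a := component g w; have ga : Rg g a := component_grade g w.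
have := tt' a; rewrite !(twist_pow_homogeneous _ _ ga) // -act.
have [ag|nag] := pselect (active sig g).
  have chi_nz : chi_of sig g ^+ k != 0 by rewrite expf_neq0 // chosen_character_neq0.
  exact: mulfI.
have sa : sig a = 0 by apply: contra_notP nag => /eqP sa; exists a.
have sa' : sig' a = 0 by apply: contra_notP nag => /eqP sa'; rewrite act; exists a.
by rewrite sa sa'.
Qed.

Lemma trace_pairing_twist_pow s k x y : hom_enum s -> Rg gam x -> Rg del y ->
  trace_pairing s x y =
  \sum_(f <- s) (chi_of f gam * (chi_of f del)^*) ^+ k * (f x * (f y)^*).
Proof.
move=> hs gx dy; have [homs _ _] := hs.
rewrite /trace_pairing.
rewrite -(hom_enum_sum_reindex (u := twist_pow k) (F := fun f => f x * (f y)^*) hs).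
- elim: s homs {hs} => [|f s IH] homs; rewrite ?big_nil // !big_cons IH; last first.
    by move=> g gs; apply: homs; right.
  have hf := homs f (or_introl erefl).
  rewrite (twist_pow_homogeneous _ hf gx) (twist_pow_homogeneous _ hf dy).
  by rewrite rmorphM rmorphXn exprMn; congr (_ + _); ring.
- exact: twist_pow_ringhom.
- exact: twist_pow_inj.
by move=> f f' ff'; rewrite !ff'.
Qed.

Lemma trace_pairing_orthogonal s x y : hom_enum s -> gam <> del ->
  Rg gam x -> Rg del y -> trace_pairing s x y = 0.
Proof.
move=> hs gd gx dy; have [homs _ _] := hs.
pose N := character_exponent; have N_gt0 : (0 < N)%N := fact_gt0 _.
(* Averaging the previous identity over [k < N] kills every term, as
   [chi_of f gam * (chi_of f del)^*] is an [N]-th root of unity other than 1. *)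
suff : trace_pairing s x y *+ N = 0.
  by move/eqP; rewrite -mulr_natr mulf_eq0 pnatr_eq0 eqn0Ngt N_gt0 orbF => /eqP.
rewrite -[N]card_ord -sumr_const.
under eq_bigr => k _ do rewrite (trace_pairing_twist_pow k hs gx dy).
rewrite exchange_big /=.
elim: s homs {hs} => [|f s IH] homs; rewrite ?big_nil // big_cons IH ?addr0; last first.
  by move=> g gs; apply: homs; right.
have hf := homs f (or_introl erefl); rewrite -mulr_suml.
have [->|fxy] := eqVneq (f x * (f y)^*) 0; first by rewrite mulr0.
have ag : active f gam.
  by exists x => //; apply: contraNneq fxy => ->; rewrite mul0r.
have ad : active f del.
  by exists y => //; apply: contraNneq fxy => ->; rewrite conjC0 mulr0.
have [_ _ chi_gd chiN] := chosen_characterP hf.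
have chid1 := unity_root_mul_conjC N_gt0 (chiN _ ad).
rewrite sum_expr_unity_root ?mul0r //.
  by rewrite exprMn -rmorphXn !chiN // rmorph1 mulr1.
apply: contra (chi_gd ag ad gd) => /eqP c1.
by rewrite -[X in X == _]mulr1 -chid1 mulrCA c1 mulr1.
Qed.

End Orthogonality.

End Grading.

Theorem mainTheorem8 (R : falgType rat) (G : grid) (Rg : gcarrier G -> R -> Prop)
  (hR : iso_prod_number_fields R) (hgr : grid_grading Rg) :
  (exists s : seq (R -> algC), hom_enum s) /\
  forall s : seq (R -> algC), hom_enum s ->
  forall gam del : gcarrier G,
    (forall x y : R, Rg gam x -> Rg del y -> trace_pairing s x y = 0) <->
    (gam <> del \/ forall x : R, Rg gam x -> x = 0).
Proof.
split=> [|s hs gam del]; first exact: hom_enum_exists.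
split=> [orth|[gd|gam0] x y gx dy].
- have [gam_del|gd] := pselect (gam = del); last by left.
  by subst del; right=> x gx; apply: (trace_pairing_self_eq0 hR hs); apply: orth.
- exact: (trace_pairing_orthogonal hgr (iso_prod_number_fields_mulC hR) hs gd).
by rewrite (gam0 x gx) trace_pairing0l.
Qed.
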